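(* Under algorithm ERGO with $\kappa\le1/18$ and $\epsilon<1/12$, the fraction of bad IDs in the system is at all times less than $1/6$.
   Context: Resource model. IDs are good (follow the protocol) or bad (controlled by a single adversary). A $k$-hard challenge imposes a cost $k$ on its solver. A round is the time to solve a $1$-hard challenge plus communication with the server. In any single round in which all IDs are solving challenges, the adversary can solve at most a $\kappa$-fraction of the challenges. In any round, at most an $\epsilon$-fraction of the good IDs depart. Joins and departures occur at distinct times; every joining ID is new. ERGO (run by a server, with GoodJEst running in parallel and providing a current estimate $\tilde J$ of the good join rate): initially, the system consists of the IDs that returned a valid solution to a $1$-hard challenge (this is the end of iteration $0$). Each subsequent iteration starts at some time $\tau$ with system $S(\tau)$; during it, every joining ID must solve a challenge of hardness $1$ plus the number of IDs that joined in the last $1/\tilde J$ seconds of the current iteration (the entrance cost). When the number of joining plus departing IDs in the iteration exceeds $|S(\tau)|/11$, a purge is performed: all IDs are issued a $1$-hard challenge, the system is reset to the IDs that solve it within one round, and the next iteration begins. *)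

From HB Require Import structures.
From mathcomp Require Import all_boot all_order all_algebra.
Set Implicit Arguments. Unset Strict Implicit. Unset Printing Implicit Defensive.
Import Order.TTheory GRing.Theory Num.Theory.
Local Open Scope ring_scope.

(* A snapshot of the system: |S(tau)| at the start of the current iteration,
   number of join/departure events so far in the current iteration, and the
   numbers of good and bad IDs currently in the system. *)
Record ergo_state := ErgoState {
  start_size : nat;
  nevents    : nat;
  ngood      : nat;
  nbad       : nat
}.

Inductive ergo_event := JoinGood | JoinBad | DepartGood | DepartBad.

(* Effect of one join/departure event on (good, bad) counts; a departing
   ID must currently be in the system. Every joining ID is new. *)
Definition event_step (e : ergo_event) (g b g' b' : nat) : Prop :=
  match e with
  | JoinGood   => g' = g.+1 /\ b' = b
  | JoinBad    => g' = g /\ b' = b.+1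
  | DepartGood => (0 < g)%N /\ g' = g.-1 /\ b' = b
  | DepartBad  => (0 < b)%N /\ g' = g /\ b' = b.-1
  end.

(* Outcome of a round in which all g good and b bad IDs of the system are
   issued a 1-hard challenge, and the system is reset to the g' good and b'
   bad IDs that solve it within the round:
   - only IDs of the system can be retained (g' <= g, b' <= b);
   - good IDs fail only by departing, and at most an eps-fraction of the good
     IDs depart in a round: (1 - eps) g <= g';
   - in this round all (good) IDs are solving challenges, so the adversary
     solves at most a kappa-fraction of the challenges: b' <= kappa (g + b'). *)
Definition purge_ok {R : realFieldType} (kappa eps : R) (g b g' b' : nat) : Prop :=
  [/\ (g' <= g)%N, (b' <= b)%N,
      (1 - eps) * g%:R <= g'%:R
    & b'%:R <= kappa * (g%:R + b'%:R)].

(* States of the system reachable under ERGO, for an arbitrary adversary and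
   arbitrary good churn. *)
Inductive ergo_reachable {R : realFieldType} (kappa eps : R) : ergo_state -> Prop :=
  | ergo_init (G B g' b' : nat) :
      (* iteration 0: initial population of G good and B bad IDs *)
      purge_ok kappa eps G B g' b' ->
      ergo_reachable kappa eps (ErgoState (g' + b') 0 g' b')
  | ergo_step (s : ergo_state) (e : ergo_event) (g' b' : nat) :
      ergo_reachable kappa eps s ->
      event_step e (ngood s) (nbad s) g' b' ->
      (11 * (nevents s).+1 <= start_size s)%N ->
      ergo_reachable kappa eps
        (ErgoState (start_size s) (nevents s).+1 g' b')
  | ergo_purge (s : ergo_state) (e : ergo_event) (g1 b1 g' b' : nat) :
      (* a join/departure making #events exceed |S(tau)|/11 triggers a purge;
         the next iteration starts with the purged system *)
      ergo_reachable kappa eps s ->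
      event_step e (ngood s) (nbad s) g1 b1 ->
      (start_size s < 11 * (nevents s).+1)%N ->
      purge_ok kappa eps g1 b1 g' b' ->
      ergo_reachable kappa eps (ErgoState (g' + b') 0 g' b').

From HB Require Import structures.
From mathcomp Require Import all_boot all_order all_algebra.
From mathcomp Require Import zify lra.
Set Implicit Arguments. Unset Strict Implicit. Unset Printing Implicit Defensive.
Import Order.TTheory GRing.Theory Num.Theory.
Local Open Scope ring_scope.

(* Write S = |S(tau)| for the size of the system at the start of
   the current iteration, k for the number of join/departure events seen so
   far in it, and b0 for the number of bad IDs at its start.
   - A purge with kappa <= 1/18 keeps at most a 1/18 fraction of bad IDs among
     the good IDs plus the retained bad ones, and with eps <= 1/12 it keeps at
     least 11/12 of the good IDs; together this gives 199 b0 <= 12 S at the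
     start of every iteration (iteration 0 included).
   - Each event raises the bad count by at most one and lowers the system
     size by at most one, and an iteration has k <= S/11 events, so at any
     time  bad <= b0 + k  and  size >= S - k.
   - Hence 6 bad <= 6 (12/199 + 1/11) S < (10/11) S <= size, i.e. the bad
     fraction stays below 1/6.
   The file proves the purge bounds, then packages the counting facts as an
   invariant of reachable states, and finally derives the theorem. *)

(* A purge retains few bad IDs: b' <= kappa (g + b') <= (g + b') / 18. *)
Lemma purge_bad_bound (R : realFieldType) (kappa eps : R) (g b g' b' : nat) :
  kappa <= 1 / 18 -> purge_ok kappa eps g b g' b' -> (17 * b' <= g)%N.
Proof.
move=> hkappa [_ _ _ hbad].
have hsum : 0 <= g%:R + b'%:R :> R by rewrite addr_ge0 ?ler0n.
suff : (17 * b')%:R <= g%:R :> R by rewrite ler_nat.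
rewrite natrM; nra.
Qed.

(* A purge retains most good IDs: g' >= (1 - eps) g >= 11 g / 12. *)
Lemma purge_good_bound (R : realFieldType) (kappa eps : R) (g b g' b' : nat) :
  eps <= 1 / 12 -> purge_ok kappa eps g b g' b' -> (11 * g <= 12 * g')%N.
Proof.
move=> heps [_ _ hgood _].
have hg : 0 <= g%:R :> R by rewrite ler0n.
suff : (11 * g)%:R <= (12 * g')%:R :> R by rewrite ler_nat.
rewrite !natrM; nra.
Qed.

Lemma purge_start_bound (R : realFieldType) (kappa eps : R) (g b g' b' : nat) :
  kappa <= 1 / 18 -> eps <= 1 / 12 -> purge_ok kappa eps g b g' b' ->
  (199 * b' <= 12 * (g' + b'))%N.
Proof.
move=> hkappa heps hp.
have := purge_bad_bound hkappa hp; have := purge_good_bound heps hp; lia.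
Qed.

Lemma event_step_counts (e : ergo_event) (g b g' b' : nat) :
  event_step e g b g' b' -> (b' <= b.+1)%N /\ (g + b <= (g' + b').+1)%N.
Proof. by case: e => /=; lia. Qed.

(* Counting invariant of an iteration: b0 bounds the bad IDs at its start. *)
Definition iteration_invariant (s : ergo_state) : Prop :=
  exists b0 : nat, [/\ (199 * b0 <= 12 * start_size s)%N,
    (nbad s <= b0 + nevents s)%N,
    (start_size s <= ngood s + nbad s + nevents s)%N &
    (11 * nevents s <= start_size s)%N].

Lemma iteration_invariant_start (g b : nat) :
  (199 * b <= 12 * (g + b))%N -> iteration_invariant (ErgoState (g + b) 0 g b).
Proof. by move=> hb; exists b; split=> /=; lia. Qed.

Lemma iteration_invariant_event (s : ergo_state) (e : ergo_event) (g' b' : nat) :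
  iteration_invariant s -> event_step e (ngood s) (nbad s) g' b' ->
  (11 * (nevents s).+1 <= start_size s)%N ->
  iteration_invariant (ErgoState (start_size s) (nevents s).+1 g' b').
Proof.
move=> [b0 [hb0 hbad hsize _]] /event_step_counts [hb' hsum] hk.
by exists b0; split=> /=; lia.
Qed.

Lemma reachable_invariant (R : realFieldType) (kappa eps : R) (s : ergo_state) :
  kappa <= 1 / 18 -> eps <= 1 / 12 ->
  ergo_reachable kappa eps s -> iteration_invariant s.
Proof.
move=> hkappa heps; elim=> {s}.
- move=> G B g' b' hp.
  exact: iteration_invariant_start (purge_start_bound hkappa heps hp).
- move=> s e g' b' _ hinv hev hk; exact: iteration_invariant_event hinv hev hk.
- move=> s e g1 b1 g' b' _ _ _ _ hp.
  exact: iteration_invariant_start (purge_start_bound hkappa heps hp).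
Qed.

Lemma iteration_invariant_bad_fraction (s : ergo_state) :
  iteration_invariant s -> (0 < ngood s + nbad s)%N ->
  (6 * nbad s < ngood s + nbad s)%N.
Proof. by move=> [b0 [hb0 hbad hsize hk]] hpos; lia. Qed.

Lemma fraction_lt_sixth (R : realFieldType) (b n : nat) :
  (6 * b < n)%N -> b%:R / n%:R < 1 / 6 :> R.
Proof.
move=> hlt; have hn : 0 < n%:R :> R by rewrite ltr0n; lia.
rewrite ltr_pdivrMr // mul1r -(ltr_nat R) natrM in hlt *; lra.
Qed.

Theorem lemma9 (R : realFieldType) (kappa eps : R) :
  0 <= kappa -> kappa <= 1 / 18 -> 0 <= eps -> eps < 1 / 12 ->
  forall s : ergo_state, ergo_reachable kappa eps s ->
  (0 < ngood s + nbad s)%N ->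
  (nbad s)%:R / (ngood s + nbad s)%:R < 1 / 6 :> R.
Proof.
move=> _ hkappa _ heps s hs hpos.
apply: fraction_lt_sixth; apply: iteration_invariant_bad_fraction hpos.
exact: reachable_invariant hkappa (ltW heps) hs.
Qed.
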